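(* Let $q$ be a prime, $A$ a group of exponent $q$ and order $q^3$, and $B$ a subgroup of order $q$ of $Z(A)$. Suppose $A$ acts by automorphisms on a finite group $G$ of order coprime to $q$ with $G=PH$, where $P$ and $H$ are $A$-invariant subgroups, $P$ is a normal $p$-subgroup of $G$ for a prime $p$, and $H$ is a nilpotent $p'$-subgroup. If $P$ is abelian, then $[P,C_H(B)]$ is contained in $\prod_{a\in A^{\#}}[C_P(a),C_H(a)]$.
   Context: $A^{\#}$ is the set of nontrivial elements of $A$; $C_X(Y)$ denotes the fixed points in $X$ of $Y$; $[X,Y]$ is the subgroup generated by commutators $[x,y]$, $x\in X$, $y\in Y$. *)

From mathcomp Require Import all_boot all_fingroup all_solvable.
Set Implicit Arguments.
Unset Strict Implicit.
Unset Printing Implicit Defensive.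

From mathcomp Require Import all_boot all_fingroup all_solvable.
From mathcomp Require Import ssralg.
Set Implicit Arguments.
Unset Strict Implicit.
Unset Printing Implicit Defensive.
Import GroupScope FiniteModule.

(** If a non-cyclic elementary abelian q-group E acts coprimely on a solvable
    group X, then X is generated by the C_X(e), e in E^#.  For abelian X this
    is the trace identity
      q u = sum_i Tr_(e2 e1^i)(u) - sum_(0<j<q) Tr_(e1^j)(u^(e2^j)),
    whose terms are fixed by e2 e1^i and e1^j respectively; the solvable case
    follows by induction along the derived series.
    Applied to A/B acting on C_H(B) (B acts trivially there), this shows that
    C_H(B) is generated by elements k commuting with some a in A \ B.  For such
    k and a, applied to E = B<a> acting on the abelian group P, it shows that P
    is generated by the C_P(e), e in E^#, while [C_P(e), k] lies in
    [C_P(e), C_H(e)].  As P is abelian, u |-> [u, k] is a homomorphism on P,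
    and the k with [P, k] <= N form a group, where N is the right-hand side;
    hence [P, C_H(B)] <= N. *)

Section ModuleTrace.

Variables (gT : finGroupType) (Y : {group gT}) (abY : abelian Y).
Implicit Types (g : gT) (u : fmod_of abY).

Definition fmod_trace g n u := (\sum_(j < n) u ^@ (g ^+ j))%R.

Lemma fmod_trace1 n u : fmod_trace 1 n u = (u *+ n)%R.
Proof.
rewrite /fmod_trace; under eq_bigr do rewrite expg1n actr1.
by rewrite GRing.sumr_const card_ord.
Qed.

Lemma fmod_trace_cent g n u :
  g \in 'N(Y) -> g ^+ n = 1 -> fmval (fmod_trace g n u) \in 'C_Y[g].
Proof.
move=> nYg gn1; rewrite inE fmodP; apply/cent1P/commgP/conjg_fixP.
rewrite -fmvalJ // /fmod_trace actr_sum; congr fmval.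
under eq_bigr do rewrite -actrM ?groupX // -expgSr.
case: n gn1 => [|n gn1]; first by rewrite !big_ord0.
by rewrite big_ord_recr big_ord_recl /= gn1 expg0 GRing.addrC.
Qed.

Lemma fmod_trace_exchange e1 e2 m n u :
    e1 \in 'N(Y) -> e2 \in 'N(Y) -> commute e1 e2 ->
  (\sum_(i < m) fmod_trace (e2 * e1 ^+ i) n u
     = \sum_(j < n) fmod_trace (e1 ^+ j) m (u ^@ e2 ^+ j))%R.
Proof.
move=> nYe1 nYe2 ce12; rewrite exchange_big; apply: eq_bigr => j _.
apply: eq_bigr => i _.
rewrite expgMn; last exact/commuteX/commute_sym.
by rewrite expgnAC actrM ?groupX.
Qed.

End ModuleTrace.

Lemma abelian_abelem_gen_cent1 (gT : finGroupType) (E Y : {group gT}) q :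
    prime q -> q.-abelem E -> ~~ cyclic E -> E \subset 'N(Y) ->
    coprime #|Y| q -> abelian Y ->
  Y \subset <<\bigcup_(e in E^#) 'C_Y[e]>>.
Proof.
move=> q_pr abelE ncycE nYE coYq abY; set W := <<_>>.
have [e1 /setD1P[ne1 Ee1]] : exists e1, e1 \in E^#.
  by apply/set0Pn; rewrite setD_eq0 subG1; apply: contraNneq ncycE => ->; apply: cyclic1.
have [e2 Ee2 e2e1] : exists2 e2, e2 \in E & e2 \notin <[e1]>.
  by apply/subsetPn; apply: contra ncycE => /cyclicS; apply; apply: cycle_cyclic.
have nYe e : e \in E -> e \in 'N(Y) by apply: subsetP.
have traceW e (v : fmod_of abY) : e \in E -> e != 1 -> fmval (fmod_trace e q v) \in W.
  move=> Ee ne; apply/mem_gen/bigcupP; exists e; first exact/setD1P.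
  by apply: fmod_trace_cent; rewrite ?nYe // -(abelem_order_p abelE Ee ne) expg_order.
apply/subsetP=> y Yy; pose u := fmod abY y.
have traces_u : (u *+ q = \sum_(i < q) fmod_trace (e2 * e1 ^+ i) q u
       - \sum_(j < q.-1) fmod_trace (e1 ^+ j.+1) q (u ^@ e2 ^+ j.+1))%R.
  rewrite fmod_trace_exchange ?nYe //; last exact: (centsP (abelem_abelian abelE)).
  rewrite -(prednK (prime_gt0 q_pr)) big_ord_recl /= !expg0 actr1 fmod_trace1.
  by rewrite GRing.addrK.
have: fmval (u *+ q)%R \in W.
  have sumW n (F : 'I_n -> fmod_of abY) :
    (forall i, fmval (F i) \in W) -> fmval (\sum_i F i)%R \in W.
    by move=> WF; rewrite fmval_sum; apply: group_prod.
  rewrite traces_u fmvalA fmvalN groupM ?groupV //; apply: sumW => i.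
    apply: traceW; first by rewrite groupM ?groupX.
    apply: contraNneq e2e1 => /(canRL (mulgK _)); rewrite mul1g => ->.
    by rewrite groupV mem_cycle.
  apply: traceW; rewrite ?groupX // -order_dvdn (abelem_order_p abelE Ee1 ne1).
  by rewrite gtnNdvd // -ltn_predRL.
by rewrite fmvalZ fmodK // -{2}(expgK coYq Yy); apply: groupX.
Qed.

Lemma sol_abelem_gen_cent1 (gT : finGroupType) (E X : {group gT}) q :
    prime q -> q.-abelem E -> ~~ cyclic E -> E \subset 'N(X) ->
    coprime #|X| q -> solvable X ->
  X \subset <<\bigcup_(e in E^#) 'C_X[e]>>.
Proof.
move=> q_pr abelE ncycE; elim: {X}_.+1 {-2}X (ltnSn #|X|) => // n IHn X.
rewrite ltnS => leXn nXE coXq solX; set W := <<_>>.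
have [-> | ntX] := eqsVneq X 1; first exact: sub1G.
pose V := (X^`(1))%G; have ltVX : V \proper X := sol_der1_proper solX (subxx X) ntX.
have sVX := proper_sub ltVX; have nVX : X \subset 'N(V) := der_norm 1 X.
have nVE : E \subset 'N(V) := char_norm_trans (der_char 1 X) nXE.
have sVW : V \subset W.
  apply: subset_trans (IHn V _ _ _ _) _.
  - exact: leq_trans (proper_card ltVX) leXn.
  - exact: subset_trans nXE (char_norms (der_char 1 X)).
  - exact: coprimeSg coXq.
  - exact: solvableS solX.
  by apply/genS/bigcupsP=> e Ee; apply: (bigcup_max e) => //; apply: setSI.
have coVE : coprime #|V| #|E|.
  by rewrite (card_pgroup (abelem_pgroup abelE)) coprimeXr ?(coprimeSg sVX).
have sXVW : X / V \subset W / V.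
  have ncycEV : ~~ cyclic (E / V).
    by rewrite -(isog_cyclic (quotient_isog nVE (coprime_TIg coVE))).
  apply: subset_trans (abelian_abelem_gen_cent1 q_pr (quotient_abelem V abelE)
    ncycEV (quotient_norms V nXE) (coprime_morphl _ coXq) (sub_der1_abelian (subxx V))) _.
  rewrite quotient_gen; last first.
    by apply/bigcupsP=> e _; apply: subset_trans (subsetIl _ _) nVX.
  apply/genS/bigcupsP=> eV /setD1P[ne /morphimP[e nVe Ee def_eV]]; subst eV.
  have ne1 : e != 1 by apply: contraNneq ne => ->; rewrite morph1.
  rewrite -cent_cycle -quotient_cycle // -coprime_quotient_cent ?cycle_subG //.
    by rewrite cent_cycle; apply/quotientS/(bigcup_max e); rewrite // !inE ne1.
  by rewrite -orderE (abelem_order_p abelE Ee ne1).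
by rewrite quotientSK // in sXVW; apply: subset_trans sXVW (mul_subG sVW _).
Qed.

Section CommutatorSubgroups.

Variable gT : finGroupType.
Implicit Types (P N : {group gT}) (S : {set gT}).

Lemma abelian_commg_gen_mem P N S k :
    abelian P -> k \in 'N(P) -> S \subset P -> P \subset <<S>> ->
    {in S, forall v, [~ v, k] \in N} -> {in P, forall u, [~ u, k] \in N}.
Proof.
move=> abP nPk sSP sPS SkN.
have groupC : group_set [set v in P | [~ v, k] \in N].
  apply/group_setP; split=> [|v w]; first by rewrite inE group1 comm1g group1.
  rewrite !inE => /andP[Pv Nv] /andP[Pw Nw]; rewrite groupM //= commMgJ.
  have Pvk : [~ v, k] \in P by rewrite commgEl groupM ?groupV // memJ_norm.
  have -> : [~ v, k] ^ w = [~ v, k] by apply/conjg_fixP/commgP/(centsP abP).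
  exact: groupM.
have sPC : P \subset Group groupC.
  apply: subset_trans sPS _; rewrite gen_subG.
  by apply/subsetP=> v Sv; rewrite inE (subsetP sSP) ?SkN.
by move=> u /(subsetP sPC); rewrite inE => /andP[].
Qed.

Lemma commg_gen_subG P N S :
    N \subset P -> S \subset 'N(P) -> {in P & S, forall u k, [~ u, k] \in N} ->
  [~: P, <<S>>] \subset N.
Proof.
move=> sNP nPS PSN; pose T := [set k in 'N(P) | [forall u in P, [~ u, k] \in N]].
have groupT : group_set T.
  apply/group_setP; split=> [|k l].
    by apply/setIdP; split=> //; apply/forall_inP=> u _; rewrite commg1 group1.
  move=> /setIdP[nPk /forall_inP PkN] /setIdP[nPl /forall_inP PlN].
  apply/setIdP; split; first exact: groupM.
  apply/forall_inP=> u Pu.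
  have Nuk : [~ u, k] \in N by apply: PkN.
  rewrite commgMJ conjg_mulR; apply: groupM; first exact: PlN.
  by apply: groupM; last apply: PlN; rewrite // (subsetP sNP).
have sST : <<S>> \subset Group groupT.
  rewrite gen_subG; apply/subsetP=> k Sk; apply/setIdP; split; first exact: (subsetP nPS).
  by apply/forall_inP=> u Pu; apply: PSN.
rewrite gen_subG; apply/subsetP=> _ /imset2P[u k Pu /(subsetP sST) + ->].
by move=> /setIdP[_ /forall_inP]; apply.
Qed.

End CommutatorSubgroups.

Lemma TI_quotientSK (gT : finGroupType) (B K L : {group gT}) :
  K \subset 'N(B) -> K :&: B = 1 -> L \subset K -> K / B \subset L / B -> K \subset L.
Proof.
move=> nBK tiKB sLK; rewrite quotientSK // => sK_BL.
by rewrite -(setIidPl sK_BL) -group_modr // tiKB mul1g.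
Qed.

Section CentralSubgroupCommutators.

Variables (gT : finGroupType) (q : nat) (A B P H : {group gT}).
Hypotheses (q_pr : prime q) (oA : #|A| = (q ^ 3)%N) (expA : exponent A %| q).
Hypotheses (sBZ : B \subset 'Z(A)) (oB : #|B| = q).
Hypotheses (nPA : A \subset 'N(P)) (nHA : A \subset 'N(H)) (nPH : H \subset 'N(P)).
Hypotheses (coPq : coprime #|P| q) (coHq : coprime #|H| q).
Hypotheses (abP : abelian P) (solH : solvable H).

Let N := <<\bigcup_(a in A^#) [~: 'C_P[a], 'C_H[a]]>>.
Let K := 'C_H(B)%G.

Let sBA : B \subset A := subset_trans sBZ (center_sub A).
Let cBA : A \subset 'C(B).
Proof. by rewrite centsC; apply: subset_trans sBZ (subsetIr _ _). Qed.

Lemma commg_mem_commute a k :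
  a \in A :\: B -> k \in K -> commute k a -> {in P, forall u, [~ u, k] \in N}.
Proof.
case/setDP=> Aa aB /setIP[Hk cBk] cka.
pose E := (B <*> <[a]>)%G.
have sEA : E \subset A by rewrite join_subG sBA cycle_subG.
have cEk : E \subset 'C[k].
  rewrite join_subG cycle_subG; apply/andP; split; last exact/cent1P.
  by rewrite sub_cent1.
have abelE : q.-abelem E.
  rewrite abelemE // (dvdn_trans (exponentS sEA)) // andbT abelianY cycle_abelian.
  by rewrite (abelianS sBZ (center_abelian A)) cycle_subG (subsetP cBA).
have ncycE : ~~ cyclic E.
  move: aB; apply: contraNN => /exponent_cyclic oE.
  have /eqP -> : B :==: E.
    rewrite eqEcard joing_subl oB -oE dvdn_leq ?prime_gt0 //.
    exact: dvdn_trans (exponentS sEA) expA.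
  by rewrite mem_gen // inE cycle_id orbT.
apply: (abelian_commg_gen_mem abP (subsetP nPH k Hk) _ (sol_abelem_gen_cent1 q_pr
   abelE ncycE (subset_trans sEA nPA) coPq (abelian_sol abP))).
  by apply/bigcupsP=> e _; apply: subsetIl.
move=> v /bigcupP[e /setD1P[ne Ee] CPe_v].
apply/mem_gen/bigcupP; exists e; first by rewrite !inE ne (subsetP sEA).
by apply: mem_commg; rewrite // inE Hk cent1C (subsetP cEk).
Qed.

Lemma cent_gen_cent1_setD : K \subset <<\bigcup_(a in A :\: B) 'C_K[a]>>.
Proof.
set S := \bigcup_(a in A :\: B) 'C_K[a].
have sKH : K \subset H := subsetIl _ _.
have nBA : A \subset 'N(B) := subset_trans cBA (cent_sub B).
have nBK : K \subset 'N(B) := subset_trans (subsetIr _ _) (cent_sub B).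
have nKA : A \subset 'N(K) by rewrite normsI ?norms_cent.
have coKq : coprime #|K| q := coprimeSg sKH coHq.
have tiKB : K :&: B = 1 by apply: coprime_TIg; rewrite oB.
have oAB : #|A / B| = (q ^ 2)%N.
  apply/eqP; rewrite -(eqn_pmul2l (prime_gt0 q_pr)) card_quotient //.
  by rewrite -{1}oB Lagrange // oA.
have expAB : exponent (A / B) %| q := dvdn_trans (exponent_quotient A B) expA.
have abelAB : q.-abelem (A / B).
  by rewrite abelemE // expAB andbT (card_p2group_abelian q_pr).
have ncycAB : ~~ cyclic (A / B).
  apply: contraL expAB => /exponent_cyclic->.
  by rewrite oAB -[X in _ %| X]expn1 (dvdn_Pexp2l _ _ (prime_gt1 q_pr)).
have sSK : S \subset K by apply/bigcupsP=> a _; apply: subsetIl.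
apply: (@TI_quotientSK _ B K <<S>>%G nBK tiKB); first by rewrite gen_subG.
apply: subset_trans (sol_abelem_gen_cent1 q_pr abelAB ncycAB (quotient_norms B nKA)
  (coprime_morphl _ coKq) (quotient_sol B (solvableS sKH solH))) _.
rewrite quotient_gen ?(subset_trans sSK) //.
apply/genS/bigcupsP=> aB /setD1P[ne /morphimP[a nBa Aa def_aB]]; subst aB.
have notBa : a \notin B by apply: contraNN ne => Ba; apply/eqP/coset_id.
rewrite -cent_cycle -quotient_cycle // -quotient_TI_subcent ?cycle_subG ?(subsetP nKA) //.
by rewrite cent_cycle; apply/quotientS/(bigcup_max a); rewrite // inE notBa.
Qed.

Lemma commg_cent_sub : [~: P, K] \subset N.
Proof.
apply: subset_trans (commgS P cent_gen_cent1_setD) (commg_gen_subG _ _ _).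
- rewrite gen_subG; apply/bigcupsP=> a _.
  by rewrite (subset_trans (commgSS (subsetIl _ _) (subsetIl _ _))) ?commg_subl.
- by apply/bigcupsP=> a _; rewrite !subIset ?nPH.
move=> u k Pu /bigcupP[a BAa /setIP[Kk /cent1P cka]].
exact: commg_mem_commute BAa Kk cka u Pu.
Qed.

End CentralSubgroupCommutators.

Theorem lemma2p4 (gT : finGroupType) (q p : nat) (A B G P H : {group gT}) :
  prime q -> #|A| = (q ^ 3)%N -> exponent A = q ->
  B \subset 'Z(A) -> #|B| = q ->
  A \subset 'N(G) -> coprime #|G| q ->
  P * H = G -> A \subset 'N(P) -> A \subset 'N(H) ->
  prime p -> P <| G -> p.-group P ->
  nilpotent H -> p^'.-group H ->
  abelian P ->
  [~: P, 'C_H(B)] \subset << \bigcup_(a in A^#) [~: 'C_P[a], 'C_H[a]] >>.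
Proof.
move=> q_pr oA expA sBZ oB _ coGq defG nPA nHA _ nsPG _ nilH _ abP.
have sPG : P \subset G by rewrite -defG mulG_subl.
have sHG : H \subset G by rewrite -defG mulG_subr.
have nPH : H \subset 'N(P) := subset_trans sHG (normal_norm nsPG).
have expAq : exponent A %| q by rewrite expA.
exact: commg_cent_sub q_pr oA expAq sBZ oB nPA nHA nPH (coprimeSg sPG coGq)
  (coprimeSg sHG coGq) abP (nilpotent_sol nilH).
Qed.
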